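(* Let $v_{i_1},\dots,v_{i_m}$ be distinct variables and $e,f,g_1,\dots,g_m,h_1,\dots,h_m\in\mathsf{Exp}/{\sim}$. Then $\mathsf{bd}\big(e[(g_1,\dots,g_m)/(v_{i_1},\dots,v_{i_m})],\,f[(h_1,\dots,h_m)/(v_{i_1},\dots,v_{i_m})]\big)\le\max\{\mathsf{bd}(e,f),\max_{1\le j\le m}\mathsf{bd}(g_j,h_j)\}$.
   Context: Fix variables $V=\{v_1,v_2,\dots\}$ and letters $\Sigma$. Expressions: $e\in\mathsf{Exp}::=0\mid v\ (v\in V)\mid a.e\mid e+f\mid\mu v.e$ ($\mu v$ binds $v$); $e[\vec f/\vec v]$ is simultaneous capture-avoiding substitution. The prechart $(\mathsf{Exp},\partial)$: least relations with $a.e\xrightarrow{a}e$; $v\rhd v$; $e+f$ has all transitions and outputs of $e$ and of $f$; $\mu w.e\rhd v$ if $e\rhd v$, $v\ne w$; $\mu v.e\xrightarrow{a}e'[\mu v.e/v]$ if $e\xrightarrow{a}e'$. Bisimilarity $\sim$ is a congruence for all operations including substitution; $\mathsf{Exp}/{\sim}$ is a prechart $\bar\partial$ via $[e]\xrightarrow{a}[e']$ iff $e\xrightarrow{a}e'$, $[e]\rhd v$ iff $e\rhd v$; it maps $[e]$ to $\beta([e])=\{(a,[e'])\}\cup\{v\mid e\rhd v\}$, a finite set. A 1-bounded pseudometric on $X$ is $d:X\times X\to[0,1]$ with $d(x,x)=0$, symmetry, triangle inequality, ordered pointwise. $d^\uparrow$ on $\Sigma\times X+V$: $d^\uparrow((a,x),(a,y))=\tfrac12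 d(x,y)$, $0$ if equal, $1$ otherwise. $\mathcal H(d)(A,B)=\max\{\sup_{x\in A}\inf_{y\in B}d(x,y),\sup_{y\in B}\inf_{x\in A}d(y,x)\}$, $\sup\emptyset=0$, $\inf\emptyset=1$. $\mathsf{bd}$ is the least fixpoint of $d\mapsto\big((x,y)\mapsto\mathcal H(d^\uparrow)(\beta(x),\beta(y))\big)$ on pseudometrics on $\mathsf{Exp}/{\sim}$. *)

From HB Require Import structures.
From mathcomp Require Import all_boot all_order all_algebra.
From mathcomp Require Import boolp classical_sets reals.
Set Implicit Arguments. Unset Strict Implicit. Unset Printing Implicit Defensive.
Import Order.TTheory GRing.Theory Num.Theory.
Local Open Scope classical_set_scope.
Local Open Scope ring_scope.

(* Variables V = {v_0, v_1, ...} are represented by nat; letters by Sigma. *)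
Section Syntax.
Variable Sigma : Type.

Inductive Exp : Type :=
| Zero : Exp
| Var : nat -> Exp
| Act : Sigma -> Exp -> Exp
| Plus : Exp -> Exp -> Exp
| Mu : nat -> Exp -> Exp.   (* Mu v e binds v in e *)

Fixpoint fv (e : Exp) : seq nat :=
  match e with
  | Zero => [::]
  | Var v => [:: v]
  | Act _ e => fv e
  | Plus e f => fv e ++ fv f
  | Mu w e => [seq u <- fv e | u != w]
  end.

Definition fresh (l : seq nat) : nat := (foldr maxn 0%N l).+1.

Definition upd (s : nat -> Exp) (w : nat) (x : Exp) : nat -> Exp :=
  fun u => if u == w then x else s u.

(* Simultaneous capture-avoiding substitution: [subst s e] replaces every free
   occurrence of u in e by (s u); bound variables are renamed to a fresh
   variable whenever they would capture a free variable of a substituted term. *)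
Fixpoint subst (s : nat -> Exp) (e : Exp) : Exp :=
  match e with
  | Zero => Zero
  | Var v => s v
  | Act a e => Act a (subst s e)
  | Plus e f => Plus (subst s e) (subst s f)
  | Mu w e =>
      let avoid := flatten [seq fv (s u) | u <- [seq u <- fv e | u != w]] in
      let w' := if w \in avoid then fresh avoid else w in
      Mu w' (subst (upd s w (Var w')) e)
  end.

Inductive step : Exp -> Sigma -> Exp -> Prop :=
| step_act a e : step (Act a e) a e
| step_plusl e f a e' : step e a e' -> step (Plus e f) a e'
| step_plusr e f a f' : step f a f' -> step (Plus e f) a f'
| step_mu v e a e' : step e a e' ->
    step (Mu v e) a (subst (upd Var v (Mu v e)) e').

Inductive out : Exp -> nat -> Prop :=
| out_var v : out (Var v) v
| out_plusl e f v : out e v -> out (Plus e f) v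
| out_plusr e f v : out f v -> out (Plus e f) v
| out_mu w e v : out e v -> v <> w -> out (Mu w e) v.

Definition bisimulation (Rel : Exp -> Exp -> Prop) : Prop :=
  forall e f, Rel e f ->
    (forall a e', step e a e' -> exists2 f', step f a f' & Rel e' f') /\
    (forall a f', step f a f' -> exists2 e', step e a e' & Rel e' f') /\
    (forall v, out e v <-> out f v).

Definition bisim (e f : Exp) : Prop :=
  exists2 Rel, bisimulation Rel & Rel e f.

(* The quotient Exp/~ : bisimilarity classes. *)
Definition Q : Type := {P : Exp -> Prop | exists e, P = bisim e}.

Definition cls (e : Exp) : Q := exist _ (bisim e) (ex_intro _ e erefl).

Definition qstep (X : Q) (a : Sigma) (Y : Q) : Prop :=
  exists e e', [/\ X = cls e, Y = cls e' & step e a e'].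
Definition qout (X : Q) (v : nat) : Prop :=
  exists2 e, X = cls e & out e v.

Definition beta (X : Q) : set ((Sigma * Q) + nat) :=
  [set z | match z with
           | inl (a, Y) => qstep X a Y
           | inr v => qout X v
           end].

Definition senv (m : nat) (vs : 'I_m -> nat) (gs : 'I_m -> Exp) : nat -> Exp :=
  fun u => if [pick j | vs j == u] is Some j then gs j else Var u.

End Syntax.

Section Metric.
Variables (R : realType) (Sigma : Type).

Definition pseudometric (X : Type) (d : X -> X -> R) : Prop :=
  [/\ forall x y, 0 <= d x y <= 1,
      forall x, d x x = 0,
      forall x y, d x y = d y x &
      forall x y z, d x z <= d x y + d y z].

Definition dup (X : Type) (d : X -> X -> R)
    (z1 z2 : (Sigma * X) + nat) : R :=
  match z1, z2 with
  | inl (a, x), inl (b, y) => if pselect (a = b) then d x y / 2 else 1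
  | inr v, inr w => if v == w then 0 else 1
  | _, _ => 1
  end.

Definition sup0 (A : set R) : R := if pselect (A = set0) then 0 else sup A.
Definition inf1 (A : set R) : R := if pselect (A = set0) then 1 else inf A.

Definition hausdorff (T : Type) (d : T -> T -> R) (A B : set T) : R :=
  Num.max (sup0 [set sup_el | exists2 x, A x & sup_el = inf1 [set d x y | y in B]])
          (sup0 [set sup_el | exists2 y, B y & sup_el = inf1 [set d y x | x in A]]).

Definition Phi (d : Q Sigma -> Q Sigma -> R) : Q Sigma -> Q Sigma -> R :=
  fun x y => hausdorff (dup d) (beta x) (beta y).

Definition is_bd (bd : Q Sigma -> Q Sigma -> R) : Prop :=
  [/\ pseudometric bd,
      Phi bd = bd &
      forall d, pseudometric d -> Phi d = d -> forall x y, bd x y <= d x y].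

End Metric.

(** Up to α-equivalence, a transition of [e[s]] is either a transition
    [e -a-> e'] followed by substitution, or a transition of [s u] for an
    output [u] of [e]; outputs of [e[s]] are the outputs of the [s u] for the
    outputs [u] of [e].  Hence, if [bd(e,f)] and all [bd(s u, t u)] are small,
    every transition of [e[s]] is matched by one of [f[t]], through a matching
    transition of [f] or of some [t u].  Because transitions are weighted by
    [1/2] in the fixpoint equation, one unfolding of [bd] turns an error [ε]
    in the bound [max(bd(e,f), sup_u bd(s u, t u))] into [ε/2]; starting from
    the trivial error [1], the bound holds up to [2^-n] for every [n].
    The α-conversions hidden in [subst] are handled by encoding expressions
    as locally nameless terms, on which transitions are preserved on the nose. *)
From Pilot Require Import Defs.
From HB Require Import structures.
From mathcomp Require Import all_boot all_order all_algebra.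
From mathcomp Require Import boolp classical_sets reals.
From mathcomp Require Import zify lra.
Import Order.TTheory GRing.Theory Num.Theory.
Set Implicit Arguments. Unset Strict Implicit. Unset Printing Implicit Defensive.

Section LocallyNameless.
Variable Sigma : Type.
Local Notation Exp := (Exp Sigma).

(* Free variables are names, bound variables are de Bruijn indices. *)
Inductive lterm : Type :=
| LZero : lterm
| LFree : nat -> lterm
| LBound : nat -> lterm
| LAct : Sigma -> lterm -> lterm
| LPlus : lterm -> lterm -> lterm
| LMu : lterm -> lterm.

Fixpoint lshift (k : nat) (t : lterm) : lterm :=
  match t with
  | LBound i => LBound (if i < k then i else i.+1)
  | LAct a t => LAct a (lshift k t)
  | LPlus t1 t2 => LPlus (lshift k t1) (lshift k t2)
  | LMu t => LMu (lshift k.+1 t)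
  | t => t
  end.

Fixpoint linst (c : nat) (u : lterm) (t : lterm) : lterm :=
  match t with
  | LBound i => if i < c then LBound i else if i == c then u else LBound i.-1
  | LAct a t => LAct a (linst c u t)
  | LPlus t1 t2 => LPlus (linst c u t1) (linst c u t2)
  | LMu t => LMu (linst c.+1 (lshift 0 u) t)
  | t => t
  end.

Ltac if_free x := lazymatch x with context[if _ then _ else _] => fail | _ => idtac end.
Ltac index_cases := repeat (simpl; match goal with
  | |- context[if ?x < ?y then _ else _] => if_free x; if_free y;
      let E := fresh "E" in case E: (x < y)
  | |- context[if ?x == ?y then _ else _] => if_free x; if_free y;
      let E := fresh "E" in case E: (x == y)
  end); try reflexivity; try congr LBound; lia.

Lemma lshift_comm t j k : j <= k -> lshift j (lshift k t) = lshift k.+1 (lshift j t).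
Proof.
elim: t j k => //= [i|a t IH|t1 IH1 t2 IH2|t IH] j k jk;
  [index_cases|by rewrite IH|by rewrite IH1 // IH2|by rewrite IH].
Qed.

Lemma linst_lshift t c u : linst c u (lshift c t) = t.
Proof.
elim: t c u => //= [i|a t IH|t1 IH1 t2 IH2|t IH] c u;
  [index_cases|by rewrite IH|by rewrite IH1 IH2|by rewrite IH].
Qed.

Lemma lshift_linst_above t c u k : c <= k ->
  lshift k (linst c u t) = linst c (lshift k u) (lshift k.+1 t).
Proof.
elim: t c u k => //= [i|a t IH|t1 IH1 t2 IH2|t IH] c u k ck;
  [index_cases|by rewrite IH|by rewrite IH1 // IH2|by rewrite IH // -lshift_comm].
Qed.

Lemma lshift_linst_below t c u j : j <= c ->
  lshift j (linst c u t) = linst c.+1 (lshift j u) (lshift j t).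
Proof.
elim: t c u j => //= [i|a t IH|t1 IH1 t2 IH2|t IH] c u j jc;
  [index_cases|by rewrite IH|by rewrite IH1 // IH2|by rewrite IH // -lshift_comm].
Qed.

Inductive lstep : lterm -> Sigma -> lterm -> Prop :=
| lstep_act a t : lstep (LAct a t) a t
| lstep_plusl t1 t2 a t' : lstep t1 a t' -> lstep (LPlus t1 t2) a t'
| lstep_plusr t1 t2 a t' : lstep t2 a t' -> lstep (LPlus t1 t2) a t'
| lstep_mu t a t' : lstep t a t' -> lstep (LMu t) a (linst 0 (LMu t) t').

Inductive lout : lterm -> nat -> Prop :=
| lout_free v : lout (LFree v) v
| lout_plusl t1 t2 v : lout t1 v -> lout (LPlus t1 t2) v
| lout_plusr t1 t2 v : lout t2 v -> lout (LPlus t1 t2) v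
| lout_mu t v : lout t v -> lout (LMu t) v.

Lemma lstep_inv t a t' : lstep t a t' ->
  match t with
  | LAct b s => b = a /\ s = t'
  | LPlus t1 t2 => lstep t1 a t' \/ lstep t2 a t'
  | LMu s => exists2 s', lstep s a s' & t' = linst 0 (LMu s) s'
  | _ => False
  end.
Proof. by case=> //=; eauto. Qed.

Lemma lout_inv t v : lout t v ->
  match t with
  | LFree w => w = v
  | LPlus t1 t2 => lout t1 v \/ lout t2 v
  | LMu s => lout s v
  | _ => False
  end.
Proof. by case=> //=; eauto. Qed.

Lemma step_inv (e : Exp) a e' : step e a e' ->
  match e with
  | Act b s => b = a /\ s = e'
  | Plus e1 e2 => step e1 a e' \/ step e2 a e'
  | Mu w s => exists2 s', step s a s' & e' = subst (upd (@Var _) w (Mu w s)) s'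
  | _ => False
  end.
Proof. by case=> //=; eauto. Qed.

Lemma out_inv (e : Exp) v : out e v ->
  match e with
  | Var w => w = v
  | Plus e1 e2 => out e1 v \/ out e2 v
  | Mu w s => out s v /\ v <> w
  | _ => False
  end.
Proof. by case=> //=; eauto. Qed.

Lemma lstep_lshift t k a t' :
  lstep (lshift k t) a t' <-> exists2 s', lstep t a s' & t' = lshift k s'.
Proof.
elim: t k a t' => [||i|b t IH|t1 IH1 t2 IH2|t IH] k a t'; split => /=;
  try by [move/lstep_inv|case=> ? /lstep_inv].
- by case/lstep_inv => <- <-; exists t => //; constructor.
- by case=> s' /lstep_inv [<- <-] ->; constructor.
- by case/lstep_inv => [/IH1|/IH2] [s' ? ->]; exists s' => //; constructor.
- case=> s' /lstep_inv [H|H] ->.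
    by apply: lstep_plusl; apply/IH1; exists s'.
  by apply: lstep_plusr; apply/IH2; exists s'.
- case/lstep_inv => b' /IH [s' ? ->] ->; exists (linst 0 (LMu t) s'); first by constructor.
  by rewrite lshift_linst_above.
- case=> s' /lstep_inv [b' H ->] ->.
  by rewrite lshift_linst_above //=; constructor; apply/IH; exists b'.
Qed.

Lemma lout_lshift t k v : lout (lshift k t) v <-> lout t v.
Proof.
elim: t k => [||i|b t IH|t1 IH1 t2 IH2|t IH] k; split => /=;
  try by [move/lout_inv|move/lout_inv => ->; constructor].
- by case/lout_inv => [/IH1|/IH2] ?; [apply: lout_plusl|apply: lout_plusr].
- by case/lout_inv => ?; [apply: lout_plusl; apply/IH1|apply: lout_plusr; apply/IH2].
- by move/lout_inv/IH => ?; constructor.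
- by move/lout_inv => ?; constructor; apply/IH.
Qed.

Definition env_under (rho : nat -> lterm) (w : nat) : nat -> lterm :=
  fun u => if u == w then LBound 0 else lshift 0 (rho u).

Fixpoint encode (rho : nat -> lterm) (e : Exp) : lterm :=
  match e with
  | Zero => LZero
  | Var v => rho v
  | Act a e => LAct a (encode rho e)
  | Plus e f => LPlus (encode rho e) (encode rho f)
  | Mu w e => LMu (encode (env_under rho w) e)
  end.

Lemma eq_encode e rho1 rho2 : {in fv e, rho1 =1 rho2} -> encode rho1 e = encode rho2 e.
Proof.
elim: e rho1 rho2 => //= [v|a e IH|e1 IH1 e2 IH2|w e IH] rho1 rho2 H.
- by apply: H; rewrite inE.
- by rewrite (IH rho1 rho2).
- by rewrite (IH1 rho1 rho2) ?(IH2 rho1 rho2) // => u Hu; apply: H; rewrite mem_cat Hu ?orbT.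
- congr LMu; apply: IH => u Hu; rewrite /env_under; case: eqP => // /eqP uw.
  by rewrite H // mem_filter uw.
Qed.

Lemma lshift_encode e rho k : lshift k (encode rho e) = encode (lshift k \o rho) e.
Proof.
elim: e rho k => //= [a e IH|e1 IH1 e2 IH2|w e IH] rho k; [by rewrite IH|by rewrite IH1 IH2|].
congr LMu; rewrite IH; apply: eq_encode => u _; rewrite /env_under /=.
by case: eqP => //= _; rewrite (lshift_comm _ (leq0n k)).
Qed.

Lemma linst_encode e rho c u : linst c u (encode rho e) = encode (linst c u \o rho) e.
Proof.
elim: e rho c u => //= [a e IH|e1 IH1 e2 IH2|w e IH] rho c u; [by rewrite IH|by rewrite IH1 IH2|].
congr LMu; rewrite IH; apply: eq_encode => x _; rewrite /env_under /=.
by case: eqP => //= _; rewrite lshift_linst_below.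
Qed.

Lemma fresh_notin (l : seq nat) : fresh l \notin l.
Proof.
have ub x : x \in l -> x <= foldr maxn 0 l.
  elim: l x => //= y l IH x; rewrite inE => /orP[/eqP->|/IH]; first exact: leq_maxl.
  by move=> xl; apply: leq_trans xl (leq_maxr _ _).
by apply/negP => /ub; rewrite /fresh ltnn.
Qed.

Lemma encode_under_notin e rho w :
  w \notin fv e -> encode (env_under rho w) e = lshift 0 (encode rho e).
Proof.
move=> we; rewrite lshift_encode; apply: eq_encode => u ue; rewrite /env_under.
by case: eqP => // uw; move: we; rewrite -uw ue.
Qed.

Lemma encode_subst e s rho : encode rho (subst s e) = encode (encode rho \o s) e.
Proof.
elim: e s rho => //= [a e IH|e1 IH1 e2 IH2|w e IH] s rho; [by rewrite IH|by rewrite IH1 IH2|].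
set avoid := flatten _; set w' := if w \in avoid then fresh avoid else w.
have w'_fresh u : u \in fv e -> u != w -> w' \notin fv (s u).
  move=> ue uw; apply: contra (_ : w' \notin avoid); last first.
    by rewrite /w'; case: ifP => [_|/negbT //]; apply: fresh_notin.
  by move=> w's; apply/flattenP; exists (fv (s u)); rewrite // map_f // mem_filter uw.
congr LMu; rewrite IH; apply: eq_encode => u ue; rewrite /env_under /upd /=.
case: eqP => [_|/eqP uw] /=; first by rewrite eqxx.
by rewrite encode_under_notin // w'_fresh.
Qed.

Lemma encode_unfold_mu w e e' rho :
  linst 0 (encode rho (Mu w e)) (encode (env_under rho w) e') =
  encode rho (subst (upd (@Var _) w (Mu w e)) e').
Proof.
rewrite linst_encode encode_subst; apply: eq_encode => u _; rewrite /env_under /upd /=.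
by case: eqP => //= _; rewrite linst_lshift.
Qed.

Lemma lstep_encode e rho a t :
  lstep (encode rho e) a t <->
  (exists2 e', step e a e' & t = encode rho e') \/
  (exists2 u, out e u & lstep (rho u) a t).
Proof.
elim: e rho a t => [|v|b e IH|e1 IH1 e2 IH2|w e IH] rho a t; split => /=.
- by move/lstep_inv.
- by case=> [[? /step_inv]|[? /out_inv]].
- by move=> H; right; exists v => //; constructor.
- by case=> [[? /step_inv //]|[? /out_inv ->]].
- by case/lstep_inv => <- <-; left; exists e => //; constructor.
- by case=> [[? /step_inv [<- <-] ->]|[? /out_inv]]; first constructor.
- case/lstep_inv => [/IH1|/IH2] [[x ? ?]|[x ? ?]]; [left|right|left|right];
    by exists x => //; constructor.
- case=> [[x /step_inv [H|H] ->]|[x /out_inv [H|H] ?]].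
  + by apply: lstep_plusl; apply/IH1; left; exists x.
  + by apply: lstep_plusr; apply/IH2; left; exists x.
  + by apply: lstep_plusl; apply/IH1; right; exists x.
  + by apply: lstep_plusr; apply/IH2; right; exists x.
- case/lstep_inv => b' /IH [[x ? ->]|[x ex xb']] ->.
    left; exists (subst (upd (@Var _) w (Mu w e)) x); first by constructor.
    by rewrite -encode_unfold_mu.
  move: xb'; rewrite /env_under; case: eqP => [_ /lstep_inv //|/eqP xw].
  case/lstep_lshift => s' ? ->; right; exists x; last by rewrite linst_lshift.
  by constructor => // /eqP; rewrite (negbTE xw).
- case=> [[x /step_inv [e' ? ->] ->]|[x /out_inv [ex xw] ?]].
    by rewrite -encode_unfold_mu /=; constructor; apply/IH; left; exists e'.
  rewrite -(linst_lshift t 0 (LMu (encode (env_under rho w) e))); constructor.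
  apply/IH; right; exists x; rewrite // /env_under; case: eqP => // _.
  by apply/lstep_lshift; exists t.
Qed.

Lemma lout_encode e rho v : lout (encode rho e) v <-> exists2 u, out e u & lout (rho u) v.
Proof.
elim: e rho v => [|x|b e IH|e1 IH1 e2 IH2|w e IH] rho v; split => /=.
- by move/lout_inv.
- by case=> ? /out_inv.
- by move=> H; exists x => //; constructor.
- by case=> ? /out_inv ->.
- by move/lout_inv.
- by case=> ? /out_inv.
- by case/lout_inv => [/IH1|/IH2] [x ? ?]; exists x => //; constructor.
- case=> x /out_inv [H|H] ?; [apply: lout_plusl; apply/IH1|apply: lout_plusr; apply/IH2];
    by exists x.
- case/lout_inv/IH => x ex; rewrite /env_under; case: eqP => [_ /lout_inv //|/eqP xw].
  move/lout_lshift => ?; exists x => //; constructor => // /eqP; by rewrite (negbTE xw).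
- case=> x /out_inv [ex xw] ?; constructor; apply/IH; exists x => //.
  by rewrite /env_under; case: eqP => // _; apply/lout_lshift.
Qed.
End LocallyNameless.

Section SubstitutionUpToBisimilarity.
Variable Sigma : Type.
Local Notation Exp := (Exp Sigma).
Implicit Types (x y z e : Exp) (s : nat -> Exp).

Definition code (e : Exp) : lterm Sigma := encode (@LFree Sigma) e.

Lemma lstep_code x a t : lstep (code x) a t <-> exists2 x', step x a x' & t = code x'.
Proof.
rewrite /code lstep_encode; split; last by left.
by case=> [//|[u _ ut]]; have := lstep_inv ut.
Qed.

Lemma lout_code x v : lout (code x) v <-> out x v.
Proof.
rewrite /code lout_encode; split; first by case=> u ? /lout_inv <-.
by move=> ?; exists v => //; constructor.
Qed.

Lemma code_subst s e : code (subst s e) = encode (code \o s) e.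
Proof. exact: encode_subst. Qed.

Lemma bisim_refl x : bisim x x.
Proof.
exists (fun e f : Exp => e = f) => // e f ->.
by split; [|split] => // a e' ?; exists e'.
Qed.

Lemma bisim_sym x y : bisim x y -> bisim y x.
Proof.
case=> Rel HR Rxy; exists (fun e f => Rel f e) => // e f /HR [? [? Hout]].
by split; [|split] => // v; rewrite Hout.
Qed.

Lemma bisim_trans x y z : bisim x y -> bisim y z -> bisim x z.
Proof.
case=> R1 H1 R1xy [R2 H2 R2yz].
exists (fun e f => exists2 g, R1 e g & R2 g f); last by exists y.
move=> e f [g /H1 [A1 [B1 C1]] /H2 [A2 [B2 C2]]]; split; [|split].
- by move=> a e' /A1 [g' /A2 [f' ? ?] ?]; exists f' => //; exists g'.
- by move=> a f' /B2 [g' /B1 [e' ? ?] ?]; exists e' => //; exists g'.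
- by move=> v; rewrite C1 C2.
Qed.

Lemma code_bisim x y : code x = code y -> bisim x y.
Proof.
move=> cxy; exists (fun e f => code e = code f) => // e f cef; split; [|split].
- move=> a e' ?; have : lstep (code f) a (code e') by rewrite -cef; apply/lstep_code; exists e'.
  by case/lstep_code => f' ? ->; exists f'.
- move=> a f' ?; have : lstep (code e) a (code f') by rewrite cef; apply/lstep_code; exists f'.
  by case/lstep_code => e' ? ->; exists e'.
- by move=> v; rewrite -!lout_code cef.
Qed.

Lemma cls_eqP x y : cls x = cls y <-> bisim x y.
Proof.
split=> [/(congr1 sval) /= bxy|bxy].
  by have := bisim_refl y; rewrite -bxy.
apply: eq_exist; apply: funext => z; apply: propext.
by split; apply: bisim_trans => //; apply: bisim_sym.
Qed.

Lemma code_cls x y : code x = code y -> cls x = cls y.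
Proof. by move/code_bisim/cls_eqP. Qed.

Lemma qstep_cls x a Y : qstep (cls x) a Y <-> exists2 x', step x a x' & Y = cls x'.
Proof.
split=> [[e0 [e1 [/esym/cls_eqP [Rel HR Rxe0] -> e0e1]]]|[x' ? ->]]; last by exists x, x'.
have [/(_ _ _ e0e1) [x' ? ?] _] := HR _ _ Rxe0.
by exists x' => //; apply/cls_eqP; exists Rel.
Qed.

Lemma qout_cls x v : qout (cls x) v <-> out x v.
Proof.
split=> [[e0 /esym/cls_eqP [Rel HR Rxe0]]|]; last by exists x.
by have [_ [_ ->]] := HR _ _ Rxe0.
Qed.

Lemma step_subst_inv s e a x : step (subst s e) a x ->
  (exists2 e', step e a e' & cls x = cls (subst s e')) \/
  (exists2 u, out e u & exists2 y, step (s u) a y & cls x = cls y).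
Proof.
move=> sx; have : lstep (code (subst s e)) a (code x) by apply/lstep_code; exists x.
rewrite code_subst lstep_encode => -[[e' ? cx]|[u ? /lstep_code [y ? cx]]].
  by left; exists e' => //; apply: code_cls; rewrite cx code_subst.
by right; exists u => //; exists y => //; apply: code_cls.
Qed.

Lemma step_subst_body s e a e' : step e a e' ->
  exists2 x, step (subst s e) a x & cls x = cls (subst s e').
Proof.
move=> ee'; have : lstep (code (subst s e)) a (code (subst s e')).
  by rewrite !code_subst; apply/lstep_encode; left; exists e'.
by case/lstep_code => x ? cx; exists x => //; apply: code_cls.
Qed.

Lemma step_subst_env s e u a y : out e u -> step (s u) a y ->
  exists2 x, step (subst s e) a x & cls x = cls y.
Proof.
move=> eu sy; have : lstep (code (subst s e)) a (code y).
  by rewrite code_subst; apply/lstep_encode; right; exists u => //; apply/lstep_code; exists y.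
by case/lstep_code => x ? cx; exists x => //; apply: code_cls.
Qed.

Lemma out_subst s e v : out (subst s e) v <-> exists2 u, out e u & out (s u) v.
Proof.
rewrite -lout_code code_subst lout_encode.
by split; case=> u ? H; exists u => //; apply/lout_code.
Qed.
End SubstitutionUpToBisimilarity.

Local Open Scope classical_set_scope.
Local Open Scope ring_scope.

Section MaxBounds.
Variables (R : realDomainType) (I : finType) (F : I -> R).

Lemma ler_bigmax0 j : F j <= \big[Num.max/0]_i F i.
Proof. by rewrite (bigD1 j) //= le_max lexx. Qed.

Lemma bigmax0_ge0 : 0 <= \big[Num.max/0]_i F i.
Proof. by elim/big_rec: _ => // i x _ x_ge0; rewrite le_max x_ge0 orbT. Qed.
End MaxBounds.

Definition hemi (R : realType) (T : Type) (d : T -> T -> R) (A B : set T) : R :=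
  Defs.sup0 [set r | exists2 x, A x & r = Defs.inf1 [set d x y | y in B]].

Section HausdorffBounds.
Variables (R : realType) (T : Type) (d : T -> T -> R).
Hypotheses (d_ge0 : forall x y, 0 <= d x y) (d_le1 : forall x y, d x y <= 1).
Implicit Types (x y : T) (A B : set T).

Lemma hausdorff_hemi A B : hausdorff d A B = Num.max (hemi d A B) (hemi d B A).
Proof. by []. Qed.

Let dist_set_lbound x B : has_lbound [set d x y | y in B].
Proof. by exists 0 => _ [y _ <-]. Qed.

Lemma inf1_le x B y : B y -> Defs.inf1 [set d x y | y in B] <= d x y.
Proof.
move=> By; have dxy : [set d x y | y in B] (d x y) by exists y.
rewrite /Defs.inf1; case: pselect => [dB0|dB_ne]; last exact: ge_inf.
by rewrite dB0 in dxy.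
Qed.

Lemma inf1_le1 x B : Defs.inf1 [set d x y | y in B] <= 1.
Proof.
rewrite /Defs.inf1; case: pselect => [//|dB_ne].
have [_ [y By _]] : [set d x y | y in B] !=set0 by apply/set0P/eqP.
by apply: le_trans (d_le1 x y); apply: ge_inf; [apply: dist_set_lbound|exists y].
Qed.

Lemma inf1_lt x B c : Defs.inf1 [set d x y | y in B] < c -> c <= 1 ->
  exists2 y, B y & d x y < c.
Proof.
rewrite /Defs.inf1; case: pselect => [dB0|dB_ne] /=; first lra.
have dB_n0 : [set d x y | y in B] !=set0 by apply/set0P/eqP.
by case/(inf_lt dB_n0) => _ [y By <-]; exists y.
Qed.

Lemma inf1_le_approx x B c (delta : R) : 0 < delta ->
  (forall eps, 0 < eps -> eps < delta -> exists2 y, B y & d x y <= c + eps) ->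
  Defs.inf1 [set d x y | y in B] <= c.
Proof.
move=> delta_gt0 approx; apply/ler_addgt0Pr => eps eps_gt0.
have eps'_gt0 : 0 < Num.min eps (delta / 2) by rewrite lt_min eps_gt0 divr_gt0.
have eps'_lt : Num.min eps (delta / 2) < delta by rewrite gt_min; apply/orP; right; lra.
have [y By dxy] := approx _ eps'_gt0 eps'_lt.
apply: le_trans (inf1_le x By) (le_trans dxy _).
by rewrite lerD2l ge_min lexx.
Qed.

Lemma hemi_ge A B x : A x -> Defs.inf1 [set d x y | y in B] <= hemi d A B.
Proof.
move=> Ax; have hx : [set r | exists2 x, A x & r = Defs.inf1 [set d x y | y in B]]
  (Defs.inf1 [set d x y | y in B]) by exists x.
rewrite /hemi /Defs.sup0; case: pselect => [hA0|hA_ne]; first by rewrite hA0 in hx.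
by apply: ub_le_sup hx; exists 1 => _ [x' _ ->]; apply: inf1_le1.
Qed.

Lemma hemi_le A B c : 0 <= c ->
  (forall x, A x -> Defs.inf1 [set d x y | y in B] <= c) -> hemi d A B <= c.
Proof.
move=> c_ge0 le_c; rewrite /hemi /Defs.sup0; case: pselect => [//|hA_ne].
by apply: ge_sup => [|_ [x Ax ->]]; [apply/set0P/eqP|apply: le_c].
Qed.

Lemma hemi_le1 A B : hemi d A B <= 1.
Proof. by apply: hemi_le => // x _; apply: inf1_le1. Qed.
End HausdorffBounds.

Section BehaviouralDistance.
Variables (R : realType) (Sigma : Type) (bd : Q Sigma -> Q Sigma -> R).
Hypothesis bd_fix : is_bd bd.
Implicit Types (X Y : Q Sigma) (z w : (Sigma * Q Sigma) + nat).

Lemma bd_ge0 X Y : 0 <= bd X Y.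
Proof. by case: bd_fix => [[bd01 _ _ _] _ _]; case/andP: (bd01 X Y). Qed.

Lemma bd_le1 X Y : bd X Y <= 1.
Proof. by case: bd_fix => [[bd01 _ _ _] _ _]; case/andP: (bd01 X Y). Qed.

Lemma bd_refl X : bd X X = 0.
Proof. by case: bd_fix => [[_ ? _ _] _ _]. Qed.

Lemma bd_sym X Y : bd X Y = bd Y X.
Proof. by case: bd_fix => [[_ _ ? _] _ _]. Qed.

Lemma dup_act (a : Sigma) X Y : dup bd (inl (a, X)) (inl (a, Y)) = bd X Y / 2.
Proof. by rewrite /=; case: pselect. Qed.

Lemma dup_ge0 z w : 0 <= dup bd z w.
Proof.
case: z w => [[a X]|v] [[b Y]|u] //=; last by case: eqP.
by case: pselect => _ //=; rewrite divr_ge0 ?bd_ge0.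
Qed.

Lemma dup_le1 z w : dup bd z w <= 1.
Proof.
case: z w => [[a X]|v] [[b Y]|u] //=; last by case: eqP.
by case: pselect => _ //=; have := bd_le1 X Y; have := bd_ge0 X Y; lra.
Qed.

Lemma bd_hemi X Y :
  bd X Y = Num.max (hemi (dup bd) (beta X) (beta Y)) (hemi (dup bd) (beta Y) (beta X)).
Proof. by case: bd_fix => [_ /(congr1 (fun d => d X Y)) <- _]; rewrite /Phi hausdorff_hemi. Qed.

Lemma beta_match X Y z c : bd X Y < c -> c <= 1 -> beta X z ->
  exists2 w, beta Y w & dup bd z w < c.
Proof.
move=> bd_lt c_le1 Xz; apply: inf1_lt c_le1; apply: le_lt_trans bd_lt.
by rewrite bd_hemi; apply: le_trans (hemi_ge dup_ge0 dup_le1 _ Xz) _; rewrite le_max lexx.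
Qed.

Lemma qout_match X Y v : bd X Y < 1 -> qout X v -> qout Y v.
Proof.
move=> bd_lt Xv; have [[[b W]|u] /= Yu] := beta_match (z := inr v) bd_lt (lexx _) Xv.
  by rewrite ltxx.
by case: eqP => [-> //|_]; rewrite ltxx.
Qed.

Lemma qstep_match X Y a X' c : bd X Y < c -> c <= 1 -> qstep X a X' ->
  exists2 Y', qstep Y a Y' & bd X' Y' / 2 < c.
Proof.
move=> bd_lt c_le1 XX'.
have [[[b Y']|u] /= Yw] := beta_match (z := inl (a, X')) bd_lt c_le1 XX'.
  by case: pselect => [ab|_] /= lt_c; [subst b; exists Y'|lra].
by lra.
Qed.
End BehaviouralDistance.

Section SubstitutionBound.
Variables (R : realType) (Sigma : Type) (bd : Q Sigma -> Q Sigma -> R).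
Hypothesis bd_fix : is_bd bd.
Local Notation Exp := (Exp Sigma).
Local Notation dist e f := (bd (cls e) (cls f)).

Section Unfolding.
Variables (s t : nat -> Exp) (c eps : R).
Hypotheses (env_le : forall u, dist (s u) (t u) <= c) (eps_ge0 : 0 <= eps).
Hypothesis subst_le : forall e f, dist (subst s e) (subst t f) <= Num.max (dist e f) c + eps.
Local Notation bound e f := (Num.max (dist e f) c).

Let bound_ge_dist e f : dist e f <= bound e f.
Proof. by rewrite le_max lexx. Qed.

Let bound_ge_env e f : c <= bound e f.
Proof. by rewrite le_max lexx orbT. Qed.

Let bound_ge0 e f : 0 <= bound e f.
Proof. exact: le_trans (bd_ge0 bd_fix _ _) (bound_ge_dist e f). Qed.

Lemma match_body_step e f a e' (delta : R) : 0 < delta -> bound e f + delta < 1 ->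
  step e a e' ->
  exists2 w, beta (cls (subst t f)) w &
    dup bd (inl (a, cls (subst s e'))) w <= bound e f + eps / 2 + delta.
Proof.
move=> delta_gt0 lt1 ee'; have dist_le := bound_ge_dist e f.
have c_le := bound_ge_env e f; have ge0 := bound_ge0 e f.
have ef_lt : dist e f < dist e f + delta by lra.
have ee'_q : qstep (cls e) a (cls e') by apply/qstep_cls; exists e'.
have [Y' /qstep_cls [f' ff' ->] e'f'_lt] := qstep_match bd_fix ef_lt (ltac:(lra)) ee'_q.
have [x fx cx] := step_subst_body t ff'.
exists (inl (a, cls x)); first by apply/qstep_cls; exists x.
rewrite cx dup_act.
have : Num.max (dist e' f') c <= 2 * (bound e f + delta).
  by rewrite ge_max; apply/andP; split; lra.
have := subst_le e' f'; lra.
Qed.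

Lemma match_env_step e f u a y (delta : R) : 0 < delta -> bound e f + delta < 1 ->
  out e u -> step (s u) a y ->
  exists2 w, beta (cls (subst t f)) w & dup bd (inl (a, cls y)) w <= bound e f + delta.
Proof.
move=> delta_gt0 lt1 eu suy; have dist_le := bound_ge_dist e f.
have c_le := bound_ge_env e f.
have fu : out f u.
  by apply/qout_cls; apply: (qout_match bd_fix) (_ : qout (cls e) u); [lra|apply/qout_cls].
have su_lt : dist (s u) (t u) < c + delta by have := env_le u; lra.
have suy_q : qstep (cls (s u)) a (cls y) by apply/qstep_cls; exists y.
have [Y' /qstep_cls [y' tuy' ->] yy'_lt] := qstep_match bd_fix su_lt (ltac:(lra)) suy_q.
have [x fx cx] := step_subst_env fu tuy'.
exists (inl (a, cls x)); first by apply/qstep_cls; exists x.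
by rewrite cx dup_act; lra.
Qed.

Lemma match_out e f v : bound e f < 1 -> out (subst s e) v -> out (subst t f) v.
Proof.
move=> lt1 /out_subst [u eu suv].
have dist_le := bound_ge_dist e f; have c_le := bound_ge_env e f.
apply/out_subst; exists u; apply/qout_cls.
  by apply: (qout_match bd_fix) (_ : qout (cls e) u); [lra|apply/qout_cls].
by apply: (qout_match bd_fix) (_ : qout (cls (s u)) v); [have := env_le u; lra|apply/qout_cls].
Qed.

Lemma beta_subst_match e f z (delta : R) : 0 < delta -> bound e f + delta < 1 ->
  beta (cls (subst s e)) z ->
  exists2 w, beta (cls (subst t f)) w & dup bd z w <= bound e f + eps / 2 + delta.
Proof.
move=> delta_gt0 lt1; have ge0 := bound_ge0 e f; case: z => [[a X]|v] /=.
  case/qstep_cls => x sx ->.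
  case: (step_subst_inv sx) => [[e' ee' ->]|[u eu [y suy ->]]].
    exact: match_body_step.
  have [w tw le_w] := match_env_step delta_gt0 lt1 eu suy.
  by exists w => //; apply: le_trans le_w _; rewrite lerD2r lerDl divr_ge0.
move/qout_cls/match_out => tv; exists (inr v); first by apply/qout_cls; apply: tv; lra.
by rewrite /= eqxx; have := eps_ge0; lra.
Qed.

Lemma hemi_subst_le e f :
  hemi (dup bd) (beta (cls (subst s e))) (beta (cls (subst t f))) <= bound e f + eps / 2.
Proof.
have ge0 := bound_ge0 e f; have half_eps_ge0 : 0 <= eps / 2 by rewrite divr_ge0.
have [ge1|lt1] := leP 1 (bound e f).
  by have := hemi_le1 (dup_ge0 bd_fix) (dup_le1 bd_fix) (beta (cls (subst s e)))
    (beta (cls (subst t f))); lra.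
apply: hemi_le => [|z sz]; first lra.
apply: (inf1_le_approx (dup_ge0 bd_fix) (delta := 1 - bound e f)) => [|delta ? ?]; first lra.
by apply: beta_subst_match => //; lra.
Qed.
End Unfolding.

Lemma bd_subst_le_pow n s t c : (forall u, dist (s u) (t u) <= c) ->
  forall e f, dist (subst s e) (subst t f) <= Num.max (dist e f) c + (2 ^+ n)^-1.
Proof.
elim: n s t => [|n IH] s t env_le e f.
  rewrite expr0 invr1; have : dist e f <= Num.max (dist e f) c by rewrite le_max lexx.
  have := bd_le1 bd_fix (cls (subst s e)) (cls (subst t f)).
  by have := bd_ge0 bd_fix (cls e) (cls f); lra.
have pow_ge0 : 0 <= (2 ^+ n : R)^-1 by rewrite invr_ge0 exprn_ge0.
have env_le' u : dist (t u) (s u) <= c by rewrite bd_sym.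
rewrite (bd_hemi bd_fix) ge_max exprS invfM mulrC; apply/andP; split.
  exact: hemi_subst_le env_le pow_ge0 (IH _ _ env_le) e f.
rewrite (bd_sym bd_fix (cls e)).
exact: hemi_subst_le env_le' pow_ge0 (IH _ _ env_le') f e.
Qed.

Lemma bd_subst_le s t c : (forall u, dist (s u) (t u) <= c) ->
  forall e f, dist (subst s e) (subst t f) <= Num.max (dist e f) c.
Proof.
move=> env_le e f; apply/ler_addgt0Pr => eps eps_gt0.
set n := Num.bound eps^-1.
apply: le_trans (bd_subst_le_pow n env_le e f) _; rewrite lerD2l.
rewrite -[eps]invrK lef_pV2 ?posrE ?exprn_gt0 ?invr_gt0 //.
apply: le_trans (ltW (archi_boundP _)) _; first by rewrite invr_ge0 ltW.
by rewrite -natrX ler_nat ltnW // ltn_expl.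
Qed.
End SubstitutionBound.

Theorem mainTheorem12 (R : realType) (Sigma : Type) (bd : Q Sigma -> Q Sigma -> R)
  (Hbd : is_bd bd) (m : nat) (vs : 'I_m -> nat) (Hvs : injective vs)
  (e f : Exp Sigma) (g h : 'I_m -> Exp Sigma) :
  bd (cls (subst (senv vs g) e)) (cls (subst (senv vs h) f))
  <= Num.max (bd (cls e) (cls f))
             (\big[Num.max/0]_(j < m) bd (cls (g j)) (cls (h j))).
Proof.
apply: (bd_subst_le Hbd) => u; rewrite /senv.
case: pickP => [j _|_]; first exact: (ler_bigmax0 (fun j => bd (cls (g j)) (cls (h j)))).
by rewrite (bd_refl Hbd) bigmax0_ge0.
Qed.
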